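(* Let $G$ be a maximal outerplanar graph with at least four vertices. Let $uv$ be an edge on its outer face with $\deg_G(u)>2$ and $\deg_G(v)>2$, let $w=\Delta(uv)$, and let $G_u=G_u(uv)$ and $G_v=G_v(uv)$ be the $uv$-segments. If $\mathrm{mvc}(G)=\mathrm{mvc}(G_u)+\mathrm{mvc}(G_v)$, then $$\mathrm{mvc}_u(G)=\min\{\mathrm{mvc}_u(G_u)+\mathrm{mvc}(G_v),\ \mathrm{mvc}(G_u)+\mathrm{mvc}_w(G_v),\ \mathrm{mvc}(G)+1\},$$ $$\mathrm{mvc}_v(G)=\min\{\mathrm{mvc}(G_u)+\mathrm{mvc}_v(G_v),\ \mathrm{mvc}_w(G_u)+\mathrm{mvc}(G_v),\ \mathrm{mvc}(G)+1\},$$ $$\mathrm{mvc}_{uv}(G)=\min\{\mathrm{mvc}_u(G_u)+\mathrm{mvc}_v(G_v),\ \mathrm{mvc}(G)+1\}.$$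
   Context: All graphs are finite and simple. A maximal outerplanar graph is an outerplanar graph to which no edge between existing vertices can be added while keeping it outerplanar. A fixed outerplanar embedding, with all vertices on the outer face, is assumed. For $S\subseteq V(G)$, $\mathrm{mvc}_S(G)$ is the minimum size of a vertex cover of $G$ containing $S$, and $\mathrm{mvc}(G)=\mathrm{mvc}_\emptyset(G)$. Braces are dropped for small sets, e.g. $\mathrm{mvc}_{uw}(G)=\mathrm{mvc}_{\{u,w\}}(G)$. For an edge $uv$ on the outer face of a maximal outerplanar graph with at least three vertices, $\Delta(uv)$ is the unique common neighbor of $u$ and $v$. $uv$-segments: let $w=\Delta(uv)$. $G_u(uv)$ is the maximal biconnected outerplanar subgraph of $G$ that has $uw$ on its outer face and does not contain $v$. Equivalently, it is the subgraph induced by $u$, $w$ and the vertices on the side of edge $uw$ not containing $v$; it is the single edge $uw$ if $\deg_G(u)=2$. $G_v(uv)$ is defined symmetrically. *)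

From mathcomp Require Import all_boot.
Set Implicit Arguments. Unset Strict Implicit. Unset Printing Implicit Defensive.

Definition simple_graph (T : finType) (e : rel T) : Prop :=
  symmetric e /\ irreflexive e.

Definition deg (T : finType) (e : rel T) (x : T) : nat := #|[set y | e x y]|.

(* A cyclic ordering s of all vertices (outer-face order) such that no two
   edges cross when drawn as chords of a convex polygon in the order s. *)
Definition outerplanar_order (T : finType) (e : rel T) (s : seq T) : Prop :=
  [/\ uniq s, (forall x : T, x \in s) &
      forall a b c d : T,
        index a s < index b s -> index b s < index c s -> index c s < index d s ->
        e a c -> e b d -> False].

Definition outerplanar (T : finType) (e : rel T) : Prop :=
  exists s : seq T, outerplanar_order e s.

Definition add_edge (T : finType) (e : rel T) (x y : T) : rel T :=
  [rel a b | e a b || ((a == x) && (b == y)) || ((a == y) && (b == x))].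

Definition maximal_outerplanar (T : finType) (e : rel T) : Prop :=
  [/\ simple_graph e, outerplanar e &
      forall x y : T, x != y -> ~~ e x y -> ~ outerplanar (add_edge e x y)].

(* uv is an edge on the outer face of the embedding given by s:
   u and v are cyclically consecutive in s. *)
Definition outer_edge (T : finType) (s : seq T) (u v : T) : Prop :=
  u \in s /\ v \in s /\
  ((index v s == (index u s).+1 %% size s) \/ (index u s == (index v s).+1 %% size s)).

Definition in_arc (i j p : nat) : bool :=
  if i < j then (i < p) && (p < j) else (i < p) || (p < j).

(* Vertex set of the segment G_u(uv), with w = Delta(uv): u, w, and the vertices
   on the side of the chord uw not containing v. *)
Definition segment (T : finType) (s : seq T) (u w v : T) : {set T} :=
  let iu := index u s in let iw := index w s in let iv := index v s in
  u |: (w |: [set x | if in_arc iu iw iv then in_arc iw iu (index x s)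
                      else in_arc iu iw (index x s)]).

Definition is_vc (T : finType) (e : rel T) (S X C : {set T}) : bool :=
  [&& X \subset C, C \subset S &
      [forall x, forall y, [&& x \in S, y \in S & e x y] ==> (x \in C) || (y \in C)]].

(* mvc_X(G[S]): minimum size of a vertex cover of G[S] containing X. *)
Definition mvc (T : finType) (e : rel T) (S X : {set T}) : nat :=
  \big[minn/#|S|]_(C : {set T} | is_vc e S X C) #|C|.

From mathcomp Require Import all_boot zify.
Set Implicit Arguments. Unset Strict Implicit. Unset Printing Implicit Defensive.

(* The triangle uvw splits G into the segments G_u and G_v, which share only
   w and are joined by the edge uv alone.  A cover C of G therefore restricts
   to covers of the segments whose sizes add up to at most |C| + [w \in C];
   conversely two segment covers glue to a cover of G as soon as one of them
   covers uv, and their union saves a vertex when both contain w.  Each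
   formula follows by comparing these bounds: since mvc(G) = mvc(G_u) +
   mvc(G_v), a cover of G of size mvc(G) containing w restricts to segment
   covers exceeding the segment optima by one in total, so one of the two
   restrictions is optimal. *)

Section VertexCovers.
Variables (T : finType) (e : rel T).
Implicit Types (S X Y C : {set T}) (x y : T).

Lemma is_vcP S X C :
  reflect [/\ X \subset C, C \subset S &
             forall x y, x \in S -> y \in S -> e x y -> (x \in C) || (y \in C)]
          (is_vc e S X C).
Proof.
apply: (iffP and3P) => [[XC CS /forallP cover]|[XC CS cover]]; split=> //.
  move=> x y xS yS exy; move/forallP/(_ y)/implyP: (cover x); apply.
  by rewrite xS yS exy.
by apply/forallP=> x; apply/forallP=> y; apply/implyP=> /and3P[]; apply: cover.
Qed.

Lemma is_vc_mem S X C x : is_vc e S X C -> x \in X -> x \in C.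
Proof. by case/is_vcP=> /subsetP XC _ _ /XC. Qed.

Lemma is_vc_edge S X C x y :
  is_vc e S X C -> x \in S -> y \in S -> e x y -> (x \in C) || (y \in C).
Proof. by case/is_vcP=> _ _; apply. Qed.

Lemma is_vc_required S X Y C : is_vc e S X C -> Y \subset C -> is_vc e S Y C.
Proof. by case/is_vcP=> _ CS cover YC; apply/is_vcP. Qed.

Lemma is_vc_setU1 S X C x : is_vc e S X C -> x \in S -> is_vc e S (x |: X) (x |: C).
Proof.
case/is_vcP=> XC CS cover xS; apply/is_vcP; split; first exact: setUS.
  by rewrite subUset sub1set xS.
by move=> y z yS zS /(cover y z yS zS) /orP[] yzC; rewrite !inE yzC ?orbT.
Qed.

Lemma is_vc_restrict S X Y C :
  is_vc e setT X C -> Y \subset C :&: S -> is_vc e S Y (C :&: S).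
Proof.
case/is_vcP=> _ _ cover YC; apply/is_vcP; split=> //; first exact: subsetIr.
by move=> x y xS yS exy; rewrite !inE xS yS !andbT; apply: cover; rewrite ?inE.
Qed.

Lemma mvc_le_card S X C : is_vc e S X C -> mvc e S X <= #|C|.
Proof.
rewrite /mvc; have : C \in index_enum {set T} by rewrite mem_index_enum.
elim: (index_enum _) => [|D r IHr] //=; rewrite inE big_cons.
case/orP=> [/eqP<- ->|Cr vcC]; first exact: geq_minl.
by case: ifP => _; rewrite ?geq_min IHr ?orbT.
Qed.

Lemma mvc_witness S X : X \subset S -> exists2 C, is_vc e S X C & #|C| = mvc e S X.
Proof.
move=> XS; rewrite /mvc.
apply: (big_ind (fun m => exists2 C, is_vc e S X C & #|C| = m)).
- exists S => //; apply/is_vcP; split=> // x y xS _ _; exact/orP/or_introl.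
- move=> _ _ [A vcA <-] [B vcB <-].
  by case: (leqP #|A| #|B|) => AB; [exists A | exists B] => //; lia.
- by move=> C vcC; exists C.
Qed.

Lemma mvc_restrict_le S X Y C :
  is_vc e setT X C -> Y \subset C :&: S -> mvc e S Y <= #|C :&: S|.
Proof. by move=> vcC YCS; apply/mvc_le_card/(is_vc_restrict vcC). Qed.

Lemma mvc_setU1_le_card S X C x :
  is_vc e S X C -> x \in S -> mvc e S (x |: X) <= #|C| + 1.
Proof.
move=> vcC xS; apply: leq_trans (mvc_le_card (is_vc_setU1 vcC xS)) _.
by rewrite cardsU1 addnC leq_add2l leq_b1.
Qed.

Lemma mvc_set1_le S x : x \in S -> mvc e S [set x] <= mvc e S set0 + 1.
Proof.
move=> xS; have [C vcC <-] := mvc_witness (sub0set S).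
by rewrite -[[set x]]setU0; apply: mvc_setU1_le_card.
Qed.

Lemma mvc_edge_le S x y :
  x \in S -> y \in S -> e x y -> mvc e S [set x; y] <= mvc e S set0 + 1.
Proof.
move=> xS yS exy; have [C vcC <-] := mvc_witness (sub0set S).
case/orP: (is_vc_edge vcC xS yS exy) => [xC|yC].
  rewrite setUC; apply: mvc_setU1_le_card yS.
  by apply: is_vc_required vcC _; rewrite sub1set.
by apply: mvc_setU1_le_card xS; apply: is_vc_required vcC _; rewrite sub1set.
Qed.

End VertexCovers.

Definition uv_split (T : finType) (e : rel T) (Gu Gv : {set T}) (u v w : T) : Prop :=
  [/\ u \in Gu, v \in Gv, Gu :&: Gv = [set w] &
      forall x y, e x y -> [|| (x \in Gu) && (y \in Gu), (x \in Gv) && (y \in Gv),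
                               (x == u) && (y == v) | (x == v) && (y == u)]].

Lemma uv_split_sym (T : finType) (e : rel T) (Gu Gv : {set T}) (u v w : T) :
  uv_split e Gu Gv u v w -> uv_split e Gv Gu v u w.
Proof.
case=> uGu vGv GI edges; split=> //; first by rewrite setIC.
by move=> x y /edges /or4P[] ->; rewrite ?orbT.
Qed.

Lemma uv_split_mem (T : finType) (e : rel T) (Gu Gv : {set T}) (u v w : T) :
  uv_split e Gu Gv u v w -> [/\ u \in Gu, v \in Gv, w \in Gu & w \in Gv].
Proof.
case=> uGu vGv GI _; have /setIP[wGu wGv] : w \in Gu :&: Gv by rewrite GI set11.
by split.
Qed.

Section SplitCovers.
Variables (T : finType) (e : rel T) (Gu Gv : {set T}) (u v w : T).
Hypothesis split_uv : uv_split e Gu Gv u v w.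
Implicit Types (XA XD X A D C : {set T}).

Lemma is_vc_glue XA XD X A D C :
  is_vc e Gu XA A -> is_vc e Gv XD D -> A :|: D \subset C ->
  (u \in C) || (v \in C) -> X \subset C -> is_vc e setT X C.
Proof.
case: split_uv => _ _ _ edges vcA vcD; rewrite subUset => /andP[AC DC] uvC XC.
apply/is_vcP; split=> // x y _ _ exy.
case/or4P: (edges x y exy) => /andP[xG yG].
- by case/orP: (is_vc_edge vcA xG yG exy) => /(subsetP AC) ->; rewrite ?orbT.
- by case/orP: (is_vc_edge vcD xG yG exy) => /(subsetP DC) ->; rewrite ?orbT.
- by rewrite (eqP xG) (eqP yG).
- by rewrite (eqP xG) (eqP yG) orbC.
Qed.

Lemma card_split_le C : #|C :&: Gu| + #|C :&: Gv| <= #|C| + (w \in C).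
Proof.
case: split_uv => _ _ GI _; rewrite -cardsUI -setIUr setIACA setIid GI.
apply: leq_add; first by rewrite subset_leq_card ?subsetIl.
case wC: (w \in C).
  by rewrite /= -(cards1 w) subset_leq_card ?subsetIr.
rewrite leqn0 cards_eq0; apply/eqP/setP=> x; rewrite !inE.
by apply/andP=> -[xC /eqP xw]; rewrite xw wC in xC.
Qed.

Lemma mvc_u_split_le :
  mvc e setT set0 = mvc e Gu set0 + mvc e Gv set0 ->
  minn (minn (mvc e Gu [set u] + mvc e Gv set0) (mvc e Gu set0 + mvc e Gv [set w]))
       (mvc e setT set0 + 1) <= mvc e setT [set u].
Proof.
move=> mvc_sum; have [uGu _ _ wGv] := uv_split_mem split_uv.
have [C vcC <-] := mvc_witness e (subsetT [set u]).
have uC := is_vc_mem vcC (set11 u).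
have lbG := mvc_le_card (is_vc_required vcC (sub0set C)).
have lbA0 := mvc_restrict_le (S := Gu) vcC (sub0set _).
have lbD0 := mvc_restrict_le (S := Gv) vcC (sub0set _).
have lbAu : mvc e Gu [set u] <= #|C :&: Gu|.
  by apply: mvc_restrict_le vcC _; rewrite sub1set inE uC uGu.
have splitC := card_split_le C.
case wC: (w \in C) splitC => /= splitC; last by lia.
have lbDw : mvc e Gv [set w] <= #|C :&: Gv|.
  by apply: mvc_restrict_le vcC _; rewrite sub1set inE wC wGv.
lia.
Qed.

Hypothesis euw : e u w.

(* Either u lies in A, or the edge uw forces w into both A and D. *)
Lemma card_glue_le XA A D :
  is_vc e Gu XA A -> w \in D -> #|A :|: D| + (u \notin A) <= #|A| + #|D|.
Proof.
move=> vcA wD; have [uGu _ wGu _] := uv_split_mem split_uv.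
rewrite -cardsUI leq_add2l; case uA: (u \in A) => //=.
have wA : w \in A by have := is_vc_edge vcA uGu wGu euw; rewrite uA.
by rewrite card_gt0; apply/set0Pn; exists w; rewrite inE wA wD.
Qed.

Lemma mvc_u_split_ge :
  mvc e setT [set u] <= minn (minn (mvc e Gu [set u] + mvc e Gv set0)
                                   (mvc e Gu set0 + mvc e Gv [set w]))
                             (mvc e setT set0 + 1).
Proof.
have [uGu _ _ wGv] := uv_split_mem split_uv.
have uGu1 : [set u] \subset Gu by rewrite sub1set.
have wGv1 : [set w] \subset Gv by rewrite sub1set.
have [Au vcAu <-] := mvc_witness e uGu1.
have [A0 vcA0 <-] := mvc_witness e (sub0set Gu).
have [D0 vcD0 <-] := mvc_witness e (sub0set Gv).
have [Dw vcDw <-] := mvc_witness e wGv1.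
have uAu := is_vc_mem vcAu (set11 u).
have wDw := is_vc_mem vcDw (set11 w).
rewrite !leq_min mvc_set1_le ?inE // andbT; apply/andP; split.
  apply: leq_trans ((leq_card_setU Au D0).1).
  apply/mvc_le_card/(is_vc_glue vcAu vcD0 (subxx _)); first by rewrite inE uAu.
  by rewrite sub1set inE uAu.
apply: leq_trans (card_glue_le vcA0 wDw).
apply: leq_trans (mvc_le_card (C := u |: (A0 :|: Dw)) _) _.
  apply: is_vc_glue vcA0 vcDw (subsetU1 _ _) _ _; first by rewrite setU11.
  by rewrite sub1set setU11.
by rewrite cardsU1 addnC leq_add2l !inE negb_or; case: (u \in A0); rewrite ?leq_b1.
Qed.

(* If no optimal cover of G_u contains u, all of them contain w, and gluing
   one to D saves w. *)
Lemma mvc_u_le_or_glue D :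
  is_vc e Gv set0 D -> v \in D -> w \in D ->
  mvc e Gu [set u] <= mvc e Gu set0 \/ mvc e setT set0 + 1 <= mvc e Gu set0 + #|D|.
Proof.
move=> vcD vD wD; have [A vcA <-] := mvc_witness e (sub0set Gu).
case uA: (u \in A); [left | right].
  by apply/mvc_le_card/(is_vc_required vcA); rewrite sub1set.
have := card_glue_le vcA wD; rewrite uA; apply: leq_trans; rewrite leq_add2r.
apply/mvc_le_card/(is_vc_glue vcA vcD (subxx _)); last exact: sub0set.
by rewrite !inE vD !orbT.
Qed.

End SplitCovers.

Lemma mvc_u_split (T : finType) (e : rel T) (Gu Gv : {set T}) (u v w : T) :
  uv_split e Gu Gv u v w -> e u w ->
  mvc e setT set0 = mvc e Gu set0 + mvc e Gv set0 ->
  mvc e setT [set u] =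
    minn (minn (mvc e Gu [set u] + mvc e Gv set0) (mvc e Gu set0 + mvc e Gv [set w]))
         (mvc e setT set0 + 1).
Proof.
move=> split_uv euw mvc_sum; apply/eqP; rewrite eqn_leq.
by rewrite (mvc_u_split_ge split_uv euw) (mvc_u_split_le split_uv mvc_sum).
Qed.

Section SplitPair.
Variables (T : finType) (e : rel T) (Gu Gv : {set T}) (u v w : T).
Hypothesis split_uv : uv_split e Gu Gv u v w.

Lemma mvc_uv_split_ge : e u v ->
  mvc e setT [set u; v] <= minn (mvc e Gu [set u] + mvc e Gv [set v]) (mvc e setT set0 + 1).
Proof.
move=> euv; have [uGu vGv _ _] := uv_split_mem split_uv.
have uGu1 : [set u] \subset Gu by rewrite sub1set.
have vGv1 : [set v] \subset Gv by rewrite sub1set.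
have [Au vcAu <-] := mvc_witness e uGu1.
have [Dv vcDv <-] := mvc_witness e vGv1.
have uAu := is_vc_mem vcAu (set11 u).
have vDv := is_vc_mem vcDv (set11 v).
rewrite leq_min mvc_edge_le ?inE // andbT.
apply: leq_trans ((leq_card_setU Au Dv).1).
apply/mvc_le_card/(is_vc_glue split_uv vcAu vcDv (subxx _)); first by rewrite inE uAu.
by apply/subsetP=> x; rewrite !inE => /orP[] /eqP->; rewrite ?uAu ?vDv ?orbT.
Qed.

Hypotheses (euw : e u w) (evw : e v w).

Lemma mvc_uv_split_le :
  mvc e setT set0 = mvc e Gu set0 + mvc e Gv set0 ->
  minn (mvc e Gu [set u] + mvc e Gv [set v]) (mvc e setT set0 + 1) <= mvc e setT [set u; v].
Proof.
move=> mvc_sum; have [uGu vGv wGu wGv] := uv_split_mem split_uv.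
have [C vcC <-] := mvc_witness e (subsetT [set u; v]).
have uC : u \in C by apply: (is_vc_mem vcC); rewrite !inE eqxx.
have vC : v \in C by apply: (is_vc_mem vcC); rewrite !inE eqxx orbT.
have uCGu : u \in C :&: Gu by rewrite inE uC uGu.
have vCGv : v \in C :&: Gv by rewrite inE vC vGv.
have lbG := mvc_le_card (is_vc_required vcC (sub0set C)).
have lbA0 := mvc_restrict_le (S := Gu) vcC (sub0set _).
have lbD0 := mvc_restrict_le (S := Gv) vcC (sub0set _).
have lbAu : mvc e Gu [set u] <= #|C :&: Gu| by apply: mvc_restrict_le vcC _; rewrite sub1set.
have lbDv : mvc e Gv [set v] <= #|C :&: Gv| by apply: mvc_restrict_le vcC _; rewrite sub1set.
have splitC := card_split_le split_uv C.
case wC: (w \in C) splitC => /= splitC;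
  last by clear -mvc_sum lbG lbAu lbDv splitC; lia.
have wCGu : w \in C :&: Gu by rewrite inE wC wGu.
have wCGv : w \in C :&: Gv by rewrite inE wC wGv.
have u_or := mvc_u_le_or_glue split_uv euw (is_vc_restrict vcC (sub0set _)) vCGv wCGv.
have v_or := mvc_u_le_or_glue (uv_split_sym split_uv) evw
  (is_vc_restrict vcC (sub0set _)) uCGu wCGu.
clear -mvc_sum lbG lbA0 lbD0 lbAu lbDv splitC u_or v_or; lia.
Qed.

End SplitPair.

Lemma mvc_uv_split (T : finType) (e : rel T) (Gu Gv : {set T}) (u v w : T) :
  uv_split e Gu Gv u v w -> e u v -> e u w -> e v w ->
  mvc e setT set0 = mvc e Gu set0 + mvc e Gv set0 ->
  mvc e setT [set u; v] = minn (mvc e Gu [set u] + mvc e Gv [set v]) (mvc e setT set0 + 1).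
Proof.
move=> split_uv euv euw evw mvc_sum; apply/eqP; rewrite eqn_leq.
by rewrite (mvc_uv_split_ge split_uv euv) (mvc_uv_split_le split_uv euw evw mvc_sum).
Qed.

Definition interleaved (a b c d : nat) : bool :=
  [|| (a < b < c) && (c < d), (b < c < d) && (d < a),
      (c < d < a) && (a < b) | (d < a < b) && (b < c)].

Lemma outerplanar_chords_not_interleaved (T : finType) (e : rel T) (s : seq T) p q r t :
  symmetric e -> outerplanar_order e s -> e p r -> e q t ->
  ~~ interleaved (index p s) (index q s) (index r s) (index t s).
Proof.
move=> esym [_ _ nocross] epr eqt; have erp : e r p by rewrite esym.
have etq : e t q by rewrite esym.
by apply/or4P=> -[] /andP[/andP[ab bc] cd];
  [apply: nocross ab bc cd epr eqt | apply: nocross ab bc cd eqt erp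
  | apply: nocross ab bc cd erp etq | apply: nocross ab bc cd etq epr].
Qed.

Lemma in_arcE i j p : in_arc i j p =
  ((i < j) && (i < p) && (p < j)) || ((j <= i) && ((i < p) || (p < j))).
Proof. by rewrite /in_arc; case: ltnP => _; rewrite ?andbT ?orbF // -andbA. Qed.

Section Segments.
Variables (T : finType) (e : rel T) (s : seq T) (u v w : T).
Hypotheses (esym : symmetric e) (eirr : irreflexive e) (hs : outerplanar_order e s).
Hypothesis succ_uv : index v s = (index u s).+1 %% size s.
Hypotheses (euw : e u w) (evw : e v w).

Local Notation Gu := (segment s u w v).
Local Notation Gv := (segment s v w u).

Let index_lt_size x : index x s < size s.
Proof. by case: hs => _ alls _; rewrite index_mem. Qed.

Let index_eq x y : (index x s == index y s) = (x == y).
Proof. by apply/eqP/eqP=> [|-> //]; apply: index_inj; case: hs. Qed.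

Let positions :
  [/\ index u s < size s, index w s < size s, index u s != index w s,
      index v s != index w s &
      index v s = (index u s).+1 \/ (index u s).+1 = size s /\ index v s = 0].
Proof.
have edge_neq x y : e x y -> index x s != index y s.
  by rewrite index_eq => exy; apply/eqP=> xy; rewrite xy eirr in exy.
split; [exact: index_lt_size | exact: index_lt_size | exact: edge_neq euw
  | exact: edge_neq evw | rewrite succ_uv].
have [lt_us|ge_us] := ltnP (index u s).+1 (size s); first by left; rewrite modn_small.
have lt_u := index_lt_size u.
right; have -> : (index u s).+1 = size s by lia.
by rewrite modnn.
Qed.

Lemma mem_segment_u x : (x \in Gu) =
  [|| index x s == index u s, index x s == index w s | in_arc (index w s) (index u s) (index x s)].
Proof.
have arc_uwv : in_arc (index u s) (index w s) (index v s).
  by have [] := positions; rewrite in_arcE; lia.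
by rewrite /segment arc_uwv !inE !index_eq.
Qed.

Lemma mem_segment_v x : (x \in Gv) =
  [|| index x s == index v s, index x s == index w s | in_arc (index v s) (index w s) (index x s)].
Proof.
have arc_vwu : in_arc (index v s) (index w s) (index u s) = false.
  by have [] := positions; rewrite in_arcE; lia.
by rewrite /segment arc_vwu !inE !index_eq.
Qed.

Lemma segment_cover x : (x \in Gu) || (x \in Gv).
Proof.
have [] := positions; have := index_lt_size x.
by rewrite mem_segment_u mem_segment_v !in_arcE; lia.
Qed.

Lemma segmentI : Gu :&: Gv = [set w].
Proof.
apply/setP=> x; rewrite in_setI in_set1 mem_segment_u mem_segment_v -index_eq.
apply/andP/eqP=> [|->]; last by rewrite eqxx !orbT.
by have [] := positions; have := index_lt_size x; rewrite !in_arcE; lia.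
Qed.

(* Otherwise the chord xy would cross uw (when y = v) or vw. *)
Lemma segment_edge x y :
  x \in Gu -> y \in Gv -> x != w -> y != w -> e x y -> x = u /\ y = v.
Proof.
rewrite mem_segment_u mem_segment_v !in_arcE => xGu yGv xw yw exy.
have [lt_u lt_w uw vw succ] := positions.
have lt_x := index_lt_size x; have lt_y := index_lt_size y.
rewrite -index_eq in xw; rewrite -index_eq in yw.
have [yv|yv] := eqVneq y v.
  subst y; have [xu|xu] := eqVneq x u; first by [].
  rewrite -index_eq in xu.
  have evx : e v x by rewrite esym.
  have := outerplanar_chords_not_interleaved esym hs euw evx; rewrite /interleaved.
  lia.
have eyx : e y x by rewrite esym.
rewrite -index_eq in yv.
have := outerplanar_chords_not_interleaved esym hs evw eyx; rewrite /interleaved.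
lia.
Qed.

Lemma segment_split : uv_split e Gu Gv u v w.
Proof.
have wG : w \in Gu :&: Gv by rewrite segmentI set11.
have /setIP[wGu wGv] := wG.
split; [by rewrite mem_segment_u eqxx | by rewrite mem_segment_v eqxx | exact: segmentI |].
move=> x y exy; have eyx : e y x by rewrite esym.
case/orP: (segment_cover x) => xG; case/orP: (segment_cover y) => yG;
  rewrite ?xG ?yG ?orbT //.
- have [-> | xw] := eqVneq x w; first by rewrite wGv /= ?orbT.
  have [-> | yw] := eqVneq y w; first by rewrite wGu /= ?orbT.
  by have [-> ->] := segment_edge xG yG xw yw exy; rewrite !eqxx !orbT.
- have [-> | xw] := eqVneq x w; first by rewrite wGu /= ?orbT.
  have [-> | yw] := eqVneq y w; first by rewrite wGv /= ?orbT.
  by have [-> ->] := segment_edge yG xG yw xw eyx; rewrite !eqxx !orbT.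
Qed.

End Segments.

Theorem lemma3 (T : finType) (e : rel T) (s : seq T) (u v w : T) :
  4 <= #|T| ->
  maximal_outerplanar e ->
  outerplanar_order e s ->
  outer_edge s u v -> e u v ->
  2 < deg e u -> 2 < deg e v ->
  e u w -> e v w ->
  let Gu := segment s u w v in
  let Gv := segment s v w u in
  mvc e setT set0 = mvc e Gu set0 + mvc e Gv set0 ->
  [/\ mvc e setT [set u] =
        minn (minn (mvc e Gu [set u] + mvc e Gv set0) (mvc e Gu set0 + mvc e Gv [set w]))
             (mvc e setT set0 + 1),
      mvc e setT [set v] =
        minn (minn (mvc e Gu set0 + mvc e Gv [set v]) (mvc e Gu [set w] + mvc e Gv set0))
             (mvc e setT set0 + 1) &
      mvc e setT [set u; v] =
        minn (mvc e Gu [set u] + mvc e Gv [set v]) (mvc e setT set0 + 1)].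
Proof.
move=> _ [[esym eirr] _ _] hs [_ [_ succ]] euv _ _ euw evw Gu Gv mvc_sum.
have split_uv : uv_split e Gu Gv u v w.
  case: succ => /eqP succ; first exact: segment_split.
  exact/uv_split_sym/(segment_split esym eirr hs succ).
split.
- exact: mvc_u_split split_uv euw mvc_sum.
- rewrite (addnC (mvc e Gu set0)) (addnC (mvc e Gu [set w])).
  by apply: mvc_u_split (uv_split_sym split_uv) evw _; rewrite addnC.
- exact: mvc_uv_split split_uv euv euw evw mvc_sum.
Qed.
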